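(* Let $G(V,E)$ be any graph with $m\ge1$ edges, let $\{u,v\}$ be an edge chosen uniformly at random from $E$, and let $t=\lceil \min(d_u,d_v)/\sqrt{m}\rceil$. Then $\mathbb{E}[t]=O(1)$, where the constant is absolute.
   Context: $d_v$ denotes the degree of vertex $v$ in $G$. *)

From mathcomp Require Import all_boot all_order all_algebra.
From mathcomp Require Import reals.
Set Implicit Arguments. Unset Strict Implicit. Unset Printing Implicit Defensive.
Import Order.TTheory GRing.Theory Num.Theory.
Local Open Scope ring_scope.

Definition simple_graph (T : finType) (e : rel T) : Prop :=
  symmetric e /\ irreflexive e.

Definition deg (T : finType) (e : rel T) (v : T) : nat := #|[set w | e v w]|.

Definition edges (T : finType) (e : rel T) : {set {set T}} :=
  [set [set p.1; p.2] | p in [set p : T * T | e p.1 p.2]].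

Definition nedges (T : finType) (e : rel T) : nat := #|edges e|.

Definition edge_mindeg (T : finType) (e : rel T) (f : {set T}) : nat :=
  \big[minn/#|T|]_(x in f) deg e x.

Definition edge_t (R : realType) (T : finType) (e : rel T) (f : {set T}) : int :=
  Num.ceil ((edge_mindeg e f)%:R / Num.sqrt ((nedges e)%:R) : R).

Definition expected_t (R : realType) (T : finType) (e : rel T) : R :=
  (\sum_(f in edges e) (edge_t R e f)%:~R) / (nedges e)%:R.

From mathcomp Require Import all_boot all_order all_algebra.
From mathcomp Require Import reals.
From mathcomp Require Import lra.
Set Implicit Arguments.
Unset Strict Implicit.
Unset Printing Implicit Defensive.
Import Order.TTheory GRing.Theory Num.Theory.
Local Open Scope ring_scope.

(* Since t <= min(d_u, d_v) / sqrt m + 1, it suffices to show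
   sum_{uv in E} min(d_u, d_v) <= 6 m sqrt m.  Bound each edge through one of
   its arcs (u, v): if d_v <= sqrt m the arc contributes at most sqrt m,
   otherwise at most d_u.  As the degrees sum to at most 2m, there are at most
   2 sqrt m heavy vertices v with d_v > sqrt m, so the heavy arcs contribute at
   most sum_u d_u * 2 sqrt m <= 4 m sqrt m. *)

Section ArcCounting.
Variables (T : finType) (e : rel T).

Definition arc_edge (p : T * T) : {set T} := [set p.1; p.2].

Lemma edge_mindeg_le (f : {set T}) x : x \in f -> (edge_mindeg e f <= deg e x)%N.
Proof. by move=> xf; rewrite /edge_mindeg -minEnat -leEnat; apply: bigmin_le_cond. Qed.

Lemma arc_edge_edges p : e p.1 p.2 -> arc_edge p \in edges e.
Proof. by move=> ep; apply/imsetP; exists p; rewrite ?inE. Qed.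

Lemma set2_inj_r {x y z : T} : [set x; y] = [set x; z] -> y = z.
Proof.
move=> xy_xz; have /set2P[yx | //] : y \in [set x; z] by rewrite -xy_xz set22.
have /set2P[zx | //] : z \in [set x; y] by rewrite xy_xz set22.
by rewrite yx zx.
Qed.

Lemma card_arc_fiber_le2 (f : {set T}) : f \in edges e ->
  (#|[set p | e p.1 p.2 & arc_edge p == f]| <= 2)%N.
Proof.
case/imsetP=> -[a b] _ ->; set F := [set p | _ & _].
have first_inj : {in F &, injective (fun p : T * T => p.1)}.
  move=> [x y] [x' y'] /[!inE] /andP[_ /eqP xy] /andP[_ /eqP xy'] /= xx'.
  by subst x'; congr (_, _); exact: set2_inj_r (etrans xy (esym xy')).
have firsts_sub : [set p.1 | p in F] \subset [set a; b].
  apply/subsetP=> _ /imsetP[[x y] /[!inE] /andP[_ /eqP xy] ->].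
  by rewrite -in_set2 -xy set21.
rewrite -(card_in_imset first_inj); apply: leq_trans (subset_leq_card firsts_sub) _.
by rewrite cards2; case: (_ != _).
Qed.

Lemma sum_deg_le : (\sum_u deg e u <= 2 * nedges e)%N.
Proof.
under eq_bigr do rewrite /deg -sum1dep_card.
rewrite pair_big_dep /=.
rewrite (partition_big arc_edge (mem (edges e))) /=; last exact: arc_edge_edges.
rewrite mulnC -sum_nat_const; apply: leq_sum => f fE.
by rewrite sum1dep_card; apply: card_arc_fiber_le2.
Qed.

Lemma sum_edges_le_sum_arcs (R : numDomainType) (G : {set T} -> R) :
  (forall f, 0 <= G f) ->
  \sum_(f in edges e) G f <= \sum_u \sum_(v | e u v) G [set u; v].
Proof.
move=> G_ge0; rewrite pair_big_dep /=.
rewrite (partition_big arc_edge (mem (edges e))) /=; last exact: arc_edge_edges.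
apply: ler_sum => _ /imsetP[p /[!inE] ep ->].
by rewrite (bigD1 p) ?ep ?eqxx //= lerDl sumr_ge0.
Qed.

End ArcCounting.

Section DegreeThreshold.
Variables (R : realFieldType) (T : finType) (e : rel T).

Let d v : R := (deg e v)%:R.
Let D : R := (\sum_v deg e v)%:R.

Lemma card_heavy_le (s : R) : 0 <= s -> #|[set v | s < d v]|%:R * s <= D.
Proof.
move=> s_ge0; rewrite -sum1dep_card natr_sum mulr_suml /D natr_sum.
rewrite [X in _ <= X](bigID (fun v => s < d v)) /= -[X in X <= _]addr0.
rewrite lerD ?sumr_ge0 //.
by apply: ler_sum => v /ltW; rewrite mul1r.
Qed.

Lemma sum_arcs_mindeg_le (s : R) : 0 < s ->
  \sum_u \sum_(v | e u v) (edge_mindeg e [set u; v])%:R <= D * s + D * (D / s).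
Proof.
move=> s_gt0; set heavy : R := #|[set v | s < d v]|%:R.
have arc_le u v :
    (edge_mindeg e [set u; v])%:R <= s + (if s < d v then d u else 0).
  have := edge_mindeg_le e (set21 u v); have := edge_mindeg_le e (set22 u v).
  rewrite -!(ler_nat R) -/(d u) -/(d v); case: ifPn => [_|]; rewrite ?ltNge /=; lra.
have out_le u :
    \sum_(v | e u v) (edge_mindeg e [set u; v])%:R <= d u * s + d u * heavy.
  apply: le_trans (ler_sum _ (fun v _ => arc_le u v)) _.
  have out_card : #|e u| = deg e u by rewrite /deg cardsE.
  rewrite big_split /= sumr_const out_card -mulr_natl lerD2l.
  rewrite [X in _ <= X](_ : _ = \sum_v (if s < d v then d u else 0)).
    by rewrite [X in _ <= X](bigID (e u)) /= lerDl sumr_ge0 // => v _; case: ifP.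
  by rewrite -big_mkcond sumr_const -mulr_natr /heavy cardsE.
have heavy_le : heavy <= D / s by rewrite ler_pdivlMr // card_heavy_le ?ltW.
apply: le_trans (ler_sum _ (fun u _ => out_le u)) _.
rewrite big_split /= -!mulr_suml /D natr_sum lerD2l.
apply: ler_wpM2l; first exact: sumr_ge0.
by rewrite -natr_sum.
Qed.

End DegreeThreshold.

Lemma sum_edges_mindeg_le (R : rcfType) (T : finType) (e : rel T) :
  (0 < nedges e)%N ->
  \sum_(f in edges e) (edge_mindeg e f)%:R
    <= 6 * (nedges e)%:R * Num.sqrt (nedges e)%:R :> R.
Proof.
move=> m_gt0; set m : R := (nedges e)%:R; set s := Num.sqrt m.
have s_gt0 : 0 < s by rewrite sqrtr_gt0 ltr0n.
have ss : s * s = m by rewrite -expr2 sqr_sqrtr ?ler0n.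
apply: le_trans (sum_edges_le_sum_arcs _ _) _ => [f|]; first exact: ler0n.
apply: le_trans (sum_arcs_mindeg_le _ s_gt0) _.
set D : R := (\sum_u _)%:R.
have D_ge0 : 0 <= D := ler0n _ _.
have D_le : D <= 2 * m by rewrite -natrM ler_nat sum_deg_le.
have D_s : D / s <= 2 * s by rewrite ler_pdivrMr // -mulrA ss.
nra.
Qed.

Theorem lemma4p2 :
  exists C : nat, forall (R : realType) (T : finType) (e : rel T),
    simple_graph e -> (1 <= nedges e)%N -> expected_t R e <= C%:R.
Proof.
exists 7%N => R T e _ m_gt0.
set m : R := (nedges e)%:R; set s := Num.sqrt m.
have s_gt0 : 0 < s by rewrite sqrtr_gt0 ltr0n.
have t_le f : (edge_t R e f)%:~R <= (edge_mindeg e f)%:R / s + 1.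
  by have := ceilB1_lt ((edge_mindeg e f)%:R / s); rewrite intrB; lra.
rewrite /expected_t ler_pdivrMr ?ltr0n //.
apply: le_trans (ler_sum _ (fun f _ => t_le f)) _.
rewrite big_split /= -mulr_suml sumr_const.
have : (\sum_(f in edges e) (edge_mindeg e f)%:R) / s <= 6 * m.
  by rewrite ler_pdivrMr // sum_edges_mindeg_le.
rewrite -/(nedges e) -/m; lra.
Qed.
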